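(* Let ${}^*$ be a nonstandard analysis, $A,B$ sets and $R\subseteq A\times B$. Let $a^*\in{}^*A$, $b^*\in{}^*B$, and let $S=\{b\in B:(a^*,\nu_B(b))\in{}^*R\}\subseteq B$. Then $$\big(\nu_{{}^*A}(a^* ),\,({}^*\nu_B)(b^* )\big)\in{}^{**}R\iff b^*\in{}^*S.$$
   Context: A nonstandard analysis is a functor ${}^*:\mathbf{Set}\to\mathbf{Set}$ (images ${}^*A$, ${}^*f$) which (i) maps the full subcategory of finite sets into itself as a self-equivalence and (ii) preserves finite products and equalizers; so ${}^*(A\times B)={}^*A\times{}^*B$ and for $R\subseteq A\times B$ (resp. $S\subseteq B$), ${}^*R\subseteq{}^*A\times{}^*B$ (resp. ${}^*S\subseteq{}^*B$). For every $a$, ${}^*\{a\}$ is a singleton whose element, viewed in ${}^*A$ via the inclusion $\{a\}\subseteq A$, is $\nu_A(a)$; this gives injections $\nu_A:A\to{}^*A$. Applying the functor twice: ${}^{**}A={}^*({}^*A)$, ${}^{**}R={}^*({}^*R)\subseteq{}^{**}A\times{}^{**}B$, the map ${}^*\nu_B:{}^*B\to{}^{**}B$, and $\nu_{{}^*A}:{}^*A\to{}^{**}A$. *)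

(* Sets are modelled by Rocq types, functions by Rocq functions,
   subsets by predicates. *)
From Stdlib Require Import List ClassicalEpsilon.

Definition finite (T : Type) : Prop := exists l : list T, forall x : T, In x l.
Definition injective {A B : Type} (f : A -> B) : Prop := forall x y, f x = f y -> x = y.
Definition surjective {A B : Type} (f : A -> B) : Prop := forall y, exists x, f x = y.
Definition bijective {A B : Type} (f : A -> B) : Prop := injective f /\ surjective f.

(* A nonstandard analysis: an endofunctor of Set which
   (i) restricts to a self-equivalence of the full subcategory of finite sets,
   (ii) preserves finite products (terminal object and binary products)
        and equalizers. *)
Record NSA := {
  F : Type -> Type;
  fmap : forall (A B : Type), (A -> B) -> F A -> F B;
  fmap_id : forall (A : Type) (x : F A), fmap A A (fun a => a) x = x;
  fmap_comp : forall (A B C : Type) (f : A -> B) (g : B -> C) (x : F A),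
      fmap A C (fun a => g (f a)) x = fmap B C g (fmap A B f x);
  fin_closed : forall T : Type, finite T -> finite (F T);
  fin_faithful : forall (T U : Type), finite T -> finite U ->
      forall f g : T -> U, (forall x, fmap T U f x = fmap T U g x) -> forall t, f t = g t;
  fin_full : forall (T U : Type), finite T -> finite U ->
      forall h : F T -> F U, exists f : T -> U, forall x, fmap T U f x = h x;
  fin_esssurj : forall U : Type, finite U ->
      exists T : Type, finite T /\ exists h : F T -> U, bijective h;
  pres_terminal : exists x : F unit, forall y : F unit, y = x;
  pres_prod : forall (A B : Type),
      bijective (fun z : F (A * B) => (fmap (A * B) A fst z, fmap (A * B) B snd z));
  pres_eq_inj : forall (A B : Type) (f g : A -> B),
      injective (fmap {x : A | f x = g x} A (@proj1_sig A (fun x => f x = g x)));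
  pres_eq_img : forall (A B : Type) (f g : A -> B) (y : F A),
      fmap A B f y = fmap A B g y <->
      exists z : F {x : A | f x = g x}, fmap _ A (@proj1_sig A (fun x => f x = g x)) z = y
}.

Arguments F N T : rename.
Arguments fmap N {A B} f x : rename.

Definition starSub (N : NSA) {A : Type} (S : A -> Prop) : F N A -> Prop :=
  fun y => exists z : F N {x : A | S x}, fmap N (@proj1_sig A S) z = y.

(* For R ⊆ A × B, *R ⊆ *A × *B, via the identification *(A×B) = *A × *B. *)
Definition starRel (N : NSA) {A B : Type} (R : A * B -> Prop) : F N A * F N B -> Prop :=
  fun uv => exists z : F N {p : A * B | R p},
    fmap N (fun p : {p : A * B | R p} => fst (proj1_sig p)) z = fst uv /\
    fmap N (fun p : {p : A * B | R p} => snd (proj1_sig p)) z = snd uv.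

Definition star_pt (N : NSA) : F N unit :=
  proj1_sig (constructive_indefinite_description _ (pres_terminal N)).

(* nu_A(a): the element of *{a} ≅ *1, viewed in *A. *)
Definition nu (N : NSA) (A : Type) (a : A) : F N A :=
  fmap N (fun _ : unit => a) (star_pt N).

(* Let [g : B -> *A * *B] send [b] to [(a*, nu_B b)]. The transfer of a
   constant map is constant, so the pair [(nu_{*A} a*, *nu_B b* )] is the
   image of [b*] under the transfer of [g]. Transfer of subsets commutes with
   preimages (a preimage is an equalizer), hence that pair lies in [**R] iff
   [b*] lies in the transfer of the preimage of [*R] under [g], which is [S]. *)
From Stdlib Require Import ClassicalEpsilon.

Section Transfer.
Variable N : NSA.

Definition star_pair {X Y : Type} (uv : F N X * F N Y) : F N (X * Y) :=
  proj1_sig (constructive_indefinite_description _ (proj2 (pres_prod N X Y) uv)).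

Lemma star_pair_spec {X Y : Type} (uv : F N X * F N Y) :
  fmap N fst (star_pair uv) = fst uv /\ fmap N snd (star_pair uv) = snd uv.
Proof.
  unfold star_pair; destruct (constructive_indefinite_description _ _) as [w <-].
  split; reflexivity.
Qed.

Lemma star_pair_unique {X Y : Type} (w : F N (X * Y)) (uv : F N X * F N Y) :
  fmap N fst w = fst uv -> fmap N snd w = snd uv -> w = star_pair uv.
Proof.
  intros Hfst Hsnd; destruct (star_pair_spec uv) as [Pfst Psnd].
  apply (proj1 (pres_prod N X Y)); simpl; congruence.
Qed.

Lemma starRel_starSub {X Y : Type} (R : X * Y -> Prop) (uv : F N X * F N Y) :
  starRel N R uv <-> starSub N R (star_pair uv).
Proof.
  destruct (star_pair_spec uv) as [Pfst Psnd]; split.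
  - intros [z [Hfst Hsnd]]; exists z.
    apply star_pair_unique; rewrite <- fmap_comp; assumption.
  - intros [z Hz]; exists z.
    rewrite !(fmap_comp N _ _ _ (@proj1_sig _ R)), Hz; split; assumption.
Qed.

Lemma star_pair_fmap {X Y Z : Type} (f : X -> Y) (g : X -> Z) (x : F N X) :
  star_pair (fmap N f x, fmap N g x) = fmap N (fun a => (f a, g a)) x.
Proof.
  symmetry; apply star_pair_unique; rewrite <- fmap_comp; reflexivity.
Qed.

Lemma fmap_const_nu {X Y : Type} (c : Y) (x : F N X) :
  fmap N (fun _ => c) x = nu N Y c.
Proof.
  unfold nu, star_pt; destruct (constructive_indefinite_description _ _) as [pt Hpt].
  simpl; rewrite <- (Hpt (fmap N (fun _ => tt) x)), <- fmap_comp; reflexivity.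
Qed.

(* The converse direction realises [(x, *g x)] as an element of the equalizer of
   [g ∘ fst] and [proj1_sig ∘ snd] on [X * {y | T y}]. *)
Lemma starSub_preimage {X Y : Type} (g : X -> Y) (T : Y -> Prop) (x : F N X) :
  starSub N (fun a => T (g a)) x <-> starSub N T (fmap N g x).
Proof.
  split.
  - intros [z <-].
    exists (fmap N (fun p : {a | T (g a)} => exist T (g (proj1_sig p)) (proj2_sig p)) z).
    rewrite <- !fmap_comp; reflexivity.
  - intros [z Hz].
    pose (w := star_pair (x, z)).
    destruct (star_pair_spec (x, z)) as [Wfst Wsnd]; simpl in Wfst, Wsnd.
    pose (f1 := fun p : X * {y | T y} => g (fst p)).
    pose (f2 := fun p : X * {y | T y} => proj1_sig (snd p)).
    assert (Heq : fmap N f1 w = fmap N f2 w).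
    { unfold f1, f2; rewrite (fmap_comp N _ _ _ fst g), (fmap_comp N _ _ _ snd).
      unfold w; rewrite Wfst, Wsnd; symmetry; exact Hz. }
    destruct (proj1 (pres_eq_img N _ _ f1 f2 w) Heq) as [e He].
    assert (Te : forall p : {p | f1 p = f2 p}, T (g (fst (proj1_sig p)))).
    { intros [[a [b Tb]] Hab]; unfold f1, f2 in Hab; simpl in *; rewrite Hab; exact Tb. }
    exists (fmap N (fun p => exist (fun a => T (g a)) (fst (proj1_sig p)) (Te p)) e).
    rewrite <- fmap_comp; simpl.
    rewrite (fmap_comp N _ _ _ (@proj1_sig _ (fun p => f1 p = f2 p)) fst), He.
    exact Wfst.
Qed.

End Transfer.

Theorem mainTheorem15 (N : NSA) (A B : Type) (R : A * B -> Prop)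
    (astar : F N A) (bstar : F N B) :
  let S : B -> Prop := fun b => starRel N R (astar, nu N B b) in
  starRel N (starRel N R) (nu N (F N A) astar, fmap N (nu N B) bstar)
  <-> starSub N S bstar.
Proof.
  intros S.
  pose (g := fun b : B => (astar, nu N B b)).
  assert (Hpair : star_pair N (nu N (F N A) astar, fmap N (nu N B) bstar)
                  = fmap N g bstar).
  { rewrite <- (fmap_const_nu N astar bstar); apply star_pair_fmap. }
  rewrite starRel_starSub, Hpair, <- starSub_preimage.
  reflexivity.
Qed.
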